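(* Let $L$ be an $R_0$-algebra. Let $\{F_t\mid t\in\Lambda\}$, where $\Lambda\subseteq(0,0.5]$, be a collection of fated filters of $L$ such that (i) $L=\bigcup_{t\in\Lambda}F_t$, and (ii) for all $s,t\in\Lambda$, $s<t$ if and only if $F_t\subset F_s$. Then the fuzzy subset $\mu$ of $L$ defined by $\mu(x)=\sup\{t\in\Lambda\mid x\in F_t\}$ for all $x\in L$ is an $(\in,\in\vee q)$-fuzzy fated filter of $L$.
   Context: An $R_0$-algebra is a bounded distributive lattice $(L,\wedge,\vee,0,1)$ with an order-reversing involution $\neg$ and a binary operation $\to$ such that for all $x,y,z\in L$: $x\to y=\neg y\to\neg x$; $1\to x=x$; $(y\to z)\wedge((x\to y)\to(x\to z))=y\to z$; $x\to(y\to z)=y\to(x\to z)$; $x\to(y\vee z)=(x\to y)\vee(x\to z)$; $(x\to y)\vee((x\to y)\to(\neg x\vee y))=1$. A fated filter of $L$ is a nonempty subset $A\subseteq L$ with $1\in A$ such that for all $x,y\in L$ and $a\in A$, $a\to((x\to y)\to x)\in A$ implies $x\in A$. For $x\in L$, $t\in(0,1]$ and a fuzzy subset $\mu:L\to[0,1]$: $x_t\in\mu$ iff $\mu(x)\ge t$; $x_t\,q\,\mu$ iff $\mu(x)+t>1$; $x_t\in\vee q\,\mu$ iff $x_t\in\mu$ or $x_t\,q\,\mu$. $\mu$ is an $(\in,\in\vee q)$-fuzzy fated filter of $L$ if (1) for all $x\in L$, $t\in(0,1]$: $x_t\in\mu\Rightarrow 1_t\in\vee q\,\mu$; and (2) for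 all $x,a,y\in L$, $t,s\in(0,1]$: if $(a\to((x\to y)\to x))_t\in\mu$ and $a_s\in\mu$ then $x_{\min\{t,s\}}\in\vee q\,\mu$. *)

From HB Require Import structures.
From mathcomp Require Import all_boot all_order all_algebra.
From mathcomp Require Import boolp classical_sets reals.
Set Implicit Arguments. Unset Strict Implicit. Unset Printing Implicit Defensive.
Import Order.TTheory GRing.Theory Num.Theory.
Local Open Scope classical_set_scope.

(* An R0-algebra structure on a bounded distributive lattice L
   (lattice order <=, meet, join, \bot = 0, \top = 1), with negation [neg]
   and implication [imp]. *)
Definition R0_algebra {d : Order.disp_t} (L : tbDistrLatticeType d)
  (neg : L -> L) (imp : L -> L -> L) : Prop :=
  (forall x y : L, (x <= y)%O -> (neg y <= neg x)%O) /\
  (forall x : L, neg (neg x) = x) /\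
  (forall x y : L, imp x y = imp (neg y) (neg x)) /\
  (forall x : L, imp \top%O x = x) /\
  (forall x y z : L,
      Order.meet (imp y z) (imp (imp x y) (imp x z)) = imp y z) /\
  (forall x y z : L, imp x (imp y z) = imp y (imp x z)) /\
  (forall x y z : L, imp x (Order.join y z) = Order.join (imp x y) (imp x z)) /\
  (forall x y : L,
      Order.join (imp x y) (imp (imp x y) (Order.join (neg x) y)) = \top%O).

Definition fated_filter {d : Order.disp_t} (L : tbDistrLatticeType d)
  (imp : L -> L -> L) (A : set L) : Prop :=
  A !=set0 /\ A \top%O /\
  (forall x y a : L, A a -> A (imp a (imp (imp x y) x)) -> A x).

Local Open Scope ring_scope.

Definition fin {T} {R : realType} (mu : T -> R) (x : T) (t : R) : Prop := t <= mu x.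
Definition fq {T} {R : realType} (mu : T -> R) (x : T) (t : R) : Prop := 1 < mu x + t.
Definition finq {T} {R : realType} (mu : T -> R) (x : T) (t : R) : Prop :=
  fin mu x t \/ fq mu x t.

Definition in_inq_fuzzy_fated_filter {d : Order.disp_t} (L : tbDistrLatticeType d)
  (imp : L -> L -> L) {R : realType} (mu : L -> R) : Prop :=
  (forall x : L, 0 <= mu x <= 1) /\
  (forall (x : L) (t : R), 0 < t <= 1 -> fin mu x t -> finq mu \top%O t) /\
  (forall (x a y : L) (t s : R), 0 < t <= 1 -> 0 < s <= 1 ->
      fin mu (imp a (imp (imp x y) x)) t -> fin mu a s ->
      finq mu x (Num.min t s)).

From HB Require Import structures.
From mathcomp Require Import all_boot all_order all_algebra.
From mathcomp Require Import boolp classical_sets reals.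
Import Order.TTheory GRing.Theory Num.Theory.
Local Open Scope classical_set_scope.
Local Open Scope ring_scope.

(* If mu x were below
   min (mu a) (mu (a -> ((x -> y) -> x))), both arguments would lie in filters
   F u1, F u2 with levels above mu x; the smaller of the two filters is then a
   fated filter containing both, hence x, so mu x >= that level. Thus mu is
   even an (\in, \in)-fuzzy fated filter. The bound t <= 1/2 only serves to
   make mu a fuzzy subset. *)

Section SupOfNestedFatedFilters.
Context {d : Order.disp_t} {L : tbDistrLatticeType d} {imp : L -> L -> L}.
Context {R : realType} {Lam : set R} {F : R -> set L}.
Hypothesis F_fated : forall t, Lam t -> fated_filter imp (F t).
Hypothesis F_cover : forall x, exists t, Lam t /\ F t x.
Hypothesis F_antitone : forall s t, Lam s -> Lam t -> s <= t -> F t `<=` F s.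
Hypothesis Lam_bounded : has_ubound Lam.

Let levels (x : L) := [set t | Lam t /\ F t x].
Let mu (x : L) := sup (levels x).

Lemma levels_has_sup x : has_sup (levels x).
Proof.
split; first by have [t ?] := F_cover x; exists t.
by case: Lam_bounded => b ub; exists b => t [/ub].
Qed.

Lemma le_level_sup [t x] : Lam t -> F t x -> t <= mu x.
Proof. by move=> Lt Ft; apply: (sup_upper_bound (levels_has_sup x)). Qed.

Lemma sup_levels_le_top x : mu x <= mu \top%O.
Proof.
apply: ge_sup => [|t [Lt _]]; first exact: (levels_has_sup x).1.
by apply: le_level_sup => //; case: (F_fated _ Lt) => _ [].
Qed.

Lemma sup_levels_fated x y a :
  Num.min (mu (imp a (imp (imp x y) x))) (mu a) <= mu x.
Proof.
rewrite leNgt; apply/negP; rewrite lt_min => /andP[lt1 lt2].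
have [u1 [L1 F1] gt1] := sup_gt (levels_has_sup _).1 lt1.
have [u2 [L2 F2] gt2] := sup_gt (levels_has_sup _).1 lt2.
suff [u [Lu Fx gtu]] : exists u, [/\ Lam u, F u x & mu x < u].
  by have := le_level_sup Lu Fx; rewrite leNgt gtu.
have closed u : Lam u -> u <= u1 -> u <= u2 -> F u x.
  move=> Lu le1 le2; case: (F_fated _ Lu) => _ [_ fated]; apply: (fated x y a).
  - exact: (F_antitone _ _ Lu L2 le2).
  - exact: (F_antitone _ _ Lu L1 le1).
case: (leP u1 u2) => [le12|lt21].
- by exists u1; split=> //; exact: closed.
- by exists u2; split=> //; apply: closed => //; exact: ltW.
Qed.

End SupOfNestedFatedFilters.

Theorem corollary3p29 (d : Order.disp_t) (L : tbDistrLatticeType d)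
  (neg : L -> L) (imp : L -> L -> L) (R : realType)
  (Lam : set R) (F : R -> set L) :
  R0_algebra neg imp ->
  (forall t, Lam t -> 0 < t <= 2^-1) ->
  (forall t, Lam t -> fated_filter imp (F t)) ->
  (forall x : L, exists t, Lam t /\ F t x) ->
  (forall s t, Lam s -> Lam t -> (s < t <-> F t `<` F s)) ->
  in_inq_fuzzy_fated_filter imp (fun x : L => sup [set t | Lam t /\ F t x]).
Proof.
move=> _ Lam_range F_fated F_cover F_order.
have F_antitone s t : Lam s -> Lam t -> s <= t -> F t `<=` F s.
  move=> Ls Lt; rewrite le_eqVlt => /orP[/eqP -> //|/(F_order _ _ Ls Lt)].
  by case.
have Lam_bounded : has_ubound Lam.
  by exists 2^-1 => t /Lam_range /andP[].
have sup_ub := le_level_sup F_cover Lam_bounded.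
split; [|split].
- move=> x; have [t [Lt Ft]] := F_cover x.
  have /andP[t_gt0 _] := Lam_range t Lt.
  apply/andP; split; first exact/ltW/(lt_le_trans t_gt0)/sup_ub.
  have le_half : sup [set t | Lam t /\ F t x] <= 2^-1.
    by apply: ge_sup => [|u [/Lam_range /andP[_ ->]]] //; exists t.
  by apply: le_trans le_half _; rewrite invf_le1 ?ler1n.
- move=> x t _ le_t; left.
  exact: (le_trans le_t (sup_levels_le_top F_fated F_cover Lam_bounded x)).
- move=> x a y t s _ _ le_t le_s; left.
  apply: le_trans (sup_levels_fated F_fated F_cover F_antitone Lam_bounded x y a).
  by rewrite le_min ge_min le_t ge_min le_s orbT.
Qed.
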